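(* In the drift-less setting, let $\rho_d=|\Psi\rangle\langle\Psi|$ be QLS but not DQLS, and suppose $\mathcal H_0=\mathrm{span}\{|\Psi\rangle,|\Phi_1\rangle\}$ with $|\Psi\rangle,|\Phi_1\rangle$ orthonormal. Then there exists a QL Hamiltonian $H_c$ such that $H_c|\Psi\rangle=0$ and $H_c|\Phi_1\rangle\notin\mathcal H_0$.
   Context: $\mathcal H=\bigotimes_{a=1}^n\mathcal H_a$ finite-dimensional with neighborhoods $\mathcal N_k\subsetneq\{1,\dots,n\}$. QL operator: $X_{\mathcal N_k}\otimes I_{\bar{\mathcal N}_k}$; QL Hamiltonian: sum of Hermitian QL operators. $\mathcal L(H,\{D_k\})(\rho)=-i[H,\rho]+\sum_k(D_k\rho D_k^\dagger-\frac12\{D_k^\dagger D_k,\rho\})$. GAS: $e^{\mathcal Lt}(\rho_0)\to\rho_d$ for every density operator $\rho_0$. QLS: there exist a QL Hamiltonian $H_c$ and QL $D_k$ with $D_k|\Psi\rangle=0$, $H_c|\Psi\rangle\in\mathbb R|\Psi\rangle$, making $\rho_d$ GAS for $\mathcal L(H_c,\{D_k\})$; DQLS: same with $H_c=0$. $\mathcal H_0=\bigcap_k\mathrm{supp}(\rho_{\mathcal N_k}\otimes I_{\bar{\mathcal N}_k})$, $\rho_{\mathcal N_k}=\mathrm{Tr}_{\bar{\mathcal N}_k}\rho_d$. *)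

From Stdlib Require Import Reals.
From HB Require Import structures.
From mathcomp Require Import all_boot.

Set Implicit Arguments.
Unset Strict Implicit.
Unset Printing Implicit Defensive.
Local Open Scope R_scope.

Record Cplx := mkC { Re : R; Im : R }.
Definition Czero : Cplx := mkC 0 0.
Definition Cone : Cplx := mkC 1 0.
Definition Ci : Cplx := mkC 0 1.
Definition Cadd (u v : Cplx) : Cplx := mkC (Re u + Re v) (Im u + Im v).
Definition Copp (u : Cplx) : Cplx := mkC (- Re u) (- Im u).
Definition Cmul (u v : Cplx) : Cplx :=
  mkC (Re u * Re v - Im u * Im v) (Re u * Im v + Im u * Re v).
Definition Cconj (u : Cplx) : Cplx := mkC (Re u) (- Im u).
Definition RtoC (r : R) : Cplx := mkC r 0.

(* ---------- the composite Hilbert space H = (x)_{a=1}^n H_a ----------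
   Subsystem a : 'I_n has dimension d a; the product basis of H is indexed
   by configurations x : Ix d (x a is the basis label of subsystem a).    *)
Definition Ix (n : nat) (d : 'I_n -> nat) := {dffun forall a : 'I_n, 'I_(d a)}.

Section Ops.
Variables (n : nat) (d : 'I_n -> nat).
Local Notation Ix := (Ix d).

Definition Vec := Ix -> Cplx.
Definition Op := Ix -> Ix -> Cplx.

Definition Csum (F : Ix -> Cplx) : Cplx := \big[Cadd/Czero]_(z : Ix) F z.

Definition Opzero : Op := fun _ _ => Czero.
Definition Opadd (A B : Op) : Op := fun x y => Cadd (A x y) (B x y).
Definition Opscale (c : Cplx) (A : Op) : Op := fun x y => Cmul c (A x y).
Definition Opmul (A B : Op) : Op := fun x y => Csum (fun z => Cmul (A x z) (B z y)).
Definition adj (A : Op) : Op := fun x y => Cconj (A y x).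
Definition apply (A : Op) (v : Vec) : Vec := fun x => Csum (fun z => Cmul (A x z) (v z)).
Definition inner (u v : Vec) : Cplx := Csum (fun x => Cmul (Cconj (u x)) (v x)).
Definition hermitian (A : Op) : Prop := forall x y, A x y = adj A x y.
Definition proj (Psi : Vec) : Op := fun x y => Cmul (Psi x) (Cconj (Psi y)).

Definition density (rho : Op) : Prop :=
  hermitian rho /\ (forall v : Vec, (0 <= Re (inner v (apply rho v)))) /\
  Csum (fun x => rho x x) = Cone.

Definition agree_out (N : {set 'I_n}) (x y : Ix) : bool :=
  [forall a, (a \notin N) ==> (x a == y a)].

(* A = X_N (x) I_{complement of N}: its matrix entries are those of an operator
   on the N-subsystems (a function of the N-labels only) times the identity
   on the complement. *)
Definition is_QL (N : {set 'I_n}) (A : Op) : Prop :=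
  exists f : Op,
    (forall x y x' y' : Ix, (forall a, a \in N -> x a = x' a /\ y a = y' a) ->
       f x y = f x' y') /\
    (forall x y : Ix, A x y = if agree_out N x y then f x y else Czero).

Variable (K : nat) (Nb : 'I_K -> {set 'I_n}).

Definition QL_op (A : Op) : Prop := exists k, is_QL (Nb k) A.

Definition QL_Ham (H : Op) : Prop :=
  exists s : seq Op,
    (forall A, List.In A s -> hermitian A /\ QL_op A) /\
    (forall x y, H x y = \big[Cadd/Czero]_(A <- s) A x y).

Definition comm (A B : Op) : Op := Opadd (Opmul A B) (Opscale (Copp Cone) (Opmul B A)).
Definition acomm (A B : Op) : Op := Opadd (Opmul A B) (Opmul B A).

Definition Lindblad (H : Op) (Ds : seq Op) (rho : Op) : Op :=
  Opadd (Opscale (Copp Ci) (comm H rho))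
        (fun x y => \big[Cadd/Czero]_(D <- Ds)
            Opadd (Opmul (Opmul D rho) (adj D))
                  (Opscale (RtoC (- / 2)) (acomm (Opmul (adj D) D) rho)) x y).

(* X t = e^{L t}(rho0) for t >= 0, entrywise as the exponential series
   sum_k t^k/k! L^k(rho0). *)
Definition is_flow (L : Op -> Op) (rho0 : Op) (X : R -> Op) : Prop :=
  forall t, (0 <= t) -> forall x y,
    infinite_sum (fun k => (Re (iter k L rho0 x y) * t ^ k / INR (Factorial.fact k)))
                 (Re (X t x y)) /\
    infinite_sum (fun k => (Im (iter k L rho0 x y) * t ^ k / INR (Factorial.fact k)))
                 (Im (X t x y)).

Definition conv_infty (f : R -> R) (l : R) : Prop :=
  forall eps, (0 < eps) -> exists T, forall t, (T <= t) -> (Rabs (f t - l) < eps).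

Definition GAS (L : Op -> Op) (rhod : Op) : Prop :=
  forall rho0, density rho0 -> forall X, is_flow L rho0 X ->
    forall x y, conv_infty (fun t => Re (X t x y)) (Re (rhod x y)) /\
                conv_infty (fun t => Im (X t x y)) (Im (rhod x y)).

Definition QLS (Psi : Vec) : Prop :=
  exists (Hc : Op) (Ds : seq Op),
    QL_Ham Hc /\
    (forall D, List.In D Ds -> QL_op D /\ forall x, apply D Psi x = Czero) /\
    (exists r : R, forall x, apply Hc Psi x = Cmul (RtoC r) (Psi x)) /\
    GAS (Lindblad Hc Ds) (proj Psi).

Definition DQLS (Psi : Vec) : Prop :=
  exists Ds : seq Op,
    (forall D, List.In D Ds -> QL_op D /\ forall x, apply D Psi x = Czero) /\
    GAS (Lindblad Opzero Ds) (proj Psi).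

(* matrix of rho_N (x) I_{complement of N}, with rho_N = Tr_{complement} rho *)
Definition merge (N : {set 'I_n}) (x z : Ix) : Ix :=
  [ffun a => if a \in N then x a else z a].

Definition ptr_ext (N : {set 'I_n}) (rho : Op) : Op := fun x y =>
  if agree_out N x y then
    \big[Cadd/Czero]_(z : Ix | [forall a, (a \in N) ==> (z a == x a)])
       rho (merge N x z) (merge N y z)
  else Czero.

(* support of a Hermitian (PSD) operator = its range *)
Definition in_supp (A : Op) (v : Vec) : Prop :=
  exists w : Vec, forall x, v x = apply A w x.

Definition in_H0 (rho : Op) (v : Vec) : Prop :=
  forall k, in_supp (ptr_ext (Nb k) rho) v.

End Ops.

(* Let (Hc, {D_k}) witness QLS, with Hc Psi = r Psi.
   (1) A quasi-local operator on N_k that annihilates Psi annihilates the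
       support of rho_{N_k} (x) I; hence every D_k kills H_0, and so Phi1.
   (2) Shifting Hc by -r times the identity (quasi-local) gives a QL
       Hamiltonian H' with H' Psi = 0.  If H' Phi1 lay in H_0, Hermiticity
       would force H' Phi1 = b Phi1 with b real, so Phi1 would be an
       eigenvector of Hc.
   (3) Then |Phi1><Phi1| is a steady state of the Lindblad dynamics, which
       contradicts global asymptotic stability of |Psi><Psi|. *)

From Stdlib Require Import Reals Lra Classical FunctionalExtensionality.
From HB Require Import structures.
From mathcomp Require Import all_boot.
(* Imported last, so that [merge] refers to the configuration merge of Defs
   rather than to the list merge of mathcomp. *)
From Pilot Require Import Defs.

Set Implicit Arguments.
Unset Strict Implicit.
Unset Printing Implicit Defensive.
Local Open Scope R_scope.

Lemma Cext (u v : Cplx) : Re u = Re v -> Im u = Im v -> u = v.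
Proof. by case: u => a b; case: v => c e /= -> ->. Qed.

Ltac csimp := apply: Cext; cbn [Re Im Cadd Cmul Cconj Copp RtoC Czero Cone Ci]; ring.

Lemma CaddA : associative Cadd. Proof. move=> *; csimp. Qed.
Lemma CaddC : commutative Cadd. Proof. move=> *; csimp. Qed.
Lemma Cadd0 : left_id Czero Cadd. Proof. move=> *; csimp. Qed.
Lemma CmulA : associative Cmul. Proof. move=> *; csimp. Qed.
Lemma CmulC : commutative Cmul. Proof. move=> *; csimp. Qed.
Lemma Cmul1 : left_id Cone Cmul. Proof. move=> *; csimp. Qed.
Lemma Cmul0l : left_zero Czero Cmul. Proof. move=> *; csimp. Qed.
Lemma Cmul0r : right_zero Czero Cmul. Proof. move=> *; csimp. Qed.
Lemma CmulDl : left_distributive Cmul Cadd. Proof. move=> *; csimp. Qed.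
Lemma CmulDr : right_distributive Cmul Cadd. Proof. move=> *; csimp. Qed.

HB.instance Definition _ := Monoid.isComLaw.Build Cplx Czero Cadd CaddA CaddC Cadd0.
HB.instance Definition _ := Monoid.isComLaw.Build Cplx Cone Cmul CmulA CmulC Cmul1.
HB.instance Definition _ := Monoid.isMulLaw.Build Cplx Czero Cmul Cmul0l Cmul0r.
HB.instance Definition _ := Monoid.isAddLaw.Build Cplx Cmul Cadd CmulDl CmulDr.

Lemma infinite_sum_head (g : nat -> R) (c : R) :
  g 0%nat = c -> (forall k, g (S k) = 0) -> infinite_sum g c.
Proof.
move=> g0 gS; have partial : forall m, sum_f_R0 g m = c.
  by elim=> [|m IH] //=; rewrite IH gS; ring.
by move=> eps eps_gt0; exists 0%nat => m _; rewrite partial /R_dist Rminus_diag Rabs_R0.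
Qed.

Lemma conv_infty_const (c l : R) : conv_infty (fun _ => c) l -> c = l.
Proof.
move=> conv; have [//|ne] := Req_dec c l.
have [T hT] := conv _ (Rabs_pos_lt _ (Rminus_eq_contra _ _ ne)).
by have := hT T (Rle_refl T); lra.
Qed.

Section Hilbert.
Variables (n : nat) (d : 'I_n -> nat).
(* [Opzero] has no argument from which d could be inferred. *)
Local Notation Opzero := (@Opzero n d).
Implicit Types (A D H : Op d) (v w : Vec d) (x y z : Ix d).

Lemma Csum_ext (F G : Ix d -> Cplx) : (forall z, F z = G z) -> Csum F = Csum G.
Proof. by move=> FG; apply: eq_bigr => z _. Qed.

Lemma Csum_zero (F : Ix d -> Cplx) : (forall z, F z = Czero) -> Csum F = Czero.
Proof. by move=> F0; rewrite /Csum big1. Qed.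

Lemma Csum_mull (F : Ix d -> Cplx) c : Cmul c (Csum F) = Csum (fun z => Cmul c (F z)).
Proof. exact: big_distrr. Qed.

Lemma Csum_mulr (F : Ix d -> Cplx) c : Cmul (Csum F) c = Csum (fun z => Cmul (F z) c).
Proof. exact: big_distrl. Qed.

Lemma Csum_add (F G : Ix d -> Cplx) :
  Csum (fun z => Cadd (F z) (G z)) = Cadd (Csum F) (Csum G).
Proof. exact: big_split. Qed.

Lemma Csum_exch (F : Ix d -> Ix d -> Cplx) :
  Csum (fun x => Csum (fun y => F x y)) = Csum (fun y => Csum (fun x => F x y)).
Proof. exact: exchange_big. Qed.

Lemma Csum_delta (m : Ix d) (G : Ix d -> Cplx) :
  Csum (fun z => if z == m then G z else Czero) = G m.
Proof. by rewrite /Csum -big_mkcond big_pred1_eq. Qed.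

Lemma Cconj_sum (F : Ix d -> Cplx) : Cconj (Csum F) = Csum (fun z => Cconj (F z)).
Proof.
by rewrite /Csum (big_morph Cconj (id1 := Czero) (op1 := Cadd)) //; [move=> *|]; csimp.
Qed.

Definition eigvec H v (l : R) : Prop := forall x, apply H v x = Cmul (RtoC l) (v x).

Lemma apply_proj (u v : Vec d) x : apply (proj u) v x = Cmul (u x) (inner u v).
Proof. rewrite /apply /inner Csum_mull; apply: Csum_ext => z; rewrite /proj; csimp. Qed.

Lemma inner_conj (u v : Vec d) : Cconj (inner u v) = inner v u.
Proof. rewrite /inner Cconj_sum; apply: Csum_ext => z; csimp. Qed.

Lemma inner_lin (u v w : Vec d) a b :
  inner u (fun x => Cadd (Cmul a (v x)) (Cmul b (w x))) =
  Cadd (Cmul a (inner u v)) (Cmul b (inner u w)).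
Proof. rewrite /inner !Csum_mull -Csum_add; apply: Csum_ext => z; csimp. Qed.

Lemma apply_mul A D v x : apply (Opmul A D) v x = apply A (apply D v) x.
Proof.
rewrite /apply /Opmul.
transitivity (Csum (fun z => Csum (fun u => Cmul (A x u) (Cmul (D u z) (v z))))).
  by apply: Csum_ext => z; rewrite Csum_mulr; apply: Csum_ext => u; csimp.
by rewrite Csum_exch; apply: Csum_ext => u; rewrite Csum_mull.
Qed.

Lemma herm_inner A (u v : Vec d) : hermitian A -> inner u (apply A v) = inner (apply A u) v.
Proof.
move=> hA; rewrite /inner /apply.
transitivity (Csum (fun x => Csum (fun z => Cmul (Cmul (Cconj (u x)) (A x z)) (v z)))).
  by apply: Csum_ext => x; rewrite Csum_mull; apply: Csum_ext => z; csimp.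
rewrite Csum_exch; apply: Csum_ext => z; rewrite Cconj_sum Csum_mulr.
by apply: Csum_ext => x; rewrite (hA x z) /adj; csimp.
Qed.

Lemma apply_adj_herm A v x : hermitian A -> apply (adj A) v x = apply A v x.
Proof. by move=> hA; apply: Csum_ext => z; rewrite -hA. Qed.

Lemma herm_adj_mul D : hermitian (Opmul (adj D) D).
Proof. by move=> x y; rewrite /adj /Opmul Cconj_sum; apply: Csum_ext => z; csimp. Qed.

Lemma mul_proj_r A v x y : Opmul A (proj v) x y = Cmul (apply A v x) (Cconj (v y)).
Proof. rewrite /Opmul /apply Csum_mulr; apply: Csum_ext => z; rewrite /proj; csimp. Qed.

Lemma mul_proj_l A v x y :
  Opmul (proj v) A x y = Cmul (v x) (Cconj (apply (adj A) v y)).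
Proof.
rewrite /Opmul /apply Cconj_sum Csum_mull.
by apply: Csum_ext => z; rewrite /proj /adj; csimp.
Qed.

Lemma density_proj v : inner v v = Cone -> density (proj v).
Proof.
move=> hv; split; [|split].
- by move=> x y; rewrite /adj /proj; csimp.
- move=> u; have -> : inner u (apply (proj v) u) = Cmul (inner u v) (inner v u).
    by rewrite /inner Csum_mulr; apply: Csum_ext => z; rewrite apply_proj /inner; csimp.
  by rewrite -(inner_conj v u); case: (inner v u) => a b /=; nra.
- by rewrite -hv; apply: Csum_ext => z; rewrite /proj; csimp.
Qed.

Lemma big_seq_zero (Ds : seq (Op d)) (F : Op d -> Cplx) :
  (forall D, List.In D Ds -> F D = Czero) -> \big[Cadd/Czero]_(D <- Ds) F D = Czero.
Proof.
elim: Ds => [|D Ds IH] F0; first by rewrite big_nil.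
rewrite big_cons F0 /=; last by left.
by rewrite IH => [|D' D'in]; [csimp | apply: F0; right].
Qed.

Lemma Lindblad_proj_stationary H (Ds : seq (Op d)) v l :
  hermitian H -> eigvec H v l ->
  (forall D, List.In D Ds -> forall x, apply D v x = Czero) ->
  forall x y, Lindblad H Ds (proj v) x y = Czero.
Proof.
move=> hH hv hD x y; rewrite /Lindblad /Opadd /Opscale /comm /Opadd /Opscale.
rewrite big_seq_zero.
  by rewrite mul_proj_r mul_proj_l apply_adj_herm // !hv; csimp.
move=> D Din; rewrite /acomm /Opadd /Opscale.
have DvD : Opmul (Opmul D (proj v)) (adj D) x y = Czero.
  by apply: Csum_zero => z; rewrite mul_proj_r hD //; csimp.
have DDv : forall z, apply (Opmul (adj D) D) v z = Czero.
  by move=> z; rewrite apply_mul; apply: Csum_zero => u; rewrite hD //; csimp.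
rewrite DvD mul_proj_r mul_proj_l apply_adj_herm; last exact: herm_adj_mul.
by rewrite !DDv; csimp.
Qed.

(* The Lindblad generator fixes the zero operator: apply the previous lemma
   to the zero vector. *)
Lemma Lindblad_zero H (Ds : seq (Op d)) :
  hermitian H -> Lindblad H Ds Opzero = Opzero.
Proof.
move=> hH; have apply0 : forall A x, apply A (fun _ => Czero) x = Czero.
  by move=> A x; apply: Csum_zero => z; csimp.
apply: functional_extensionality => x; apply: functional_extensionality => y.
have zero_proj : Opzero = proj (fun _ : Ix d => Czero).
  by do 2!apply: functional_extensionality => ?; rewrite /proj /Opzero; csimp.
rewrite {1}zero_proj.
by apply: (Lindblad_proj_stationary (l := 0)) => // z; rewrite apply0; csimp.
Qed.

Lemma fixed_point_flow (L : Op d -> Op d) (rho : Op d) :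
  L rho = Opzero -> L Opzero = Opzero -> is_flow L rho (fun _ => rho).
Proof.
move=> Lrho L0; have iter_vanish : forall k, iter k.+1 L rho = Opzero.
  by elim=> [|k IH]; [exact: Lrho | rewrite iterS IH].
move=> t _ x y; split; apply: infinite_sum_head => [|k]; cbv beta;
  by rewrite ?iter_vanish /= ?Rdiv_1_r ?Rmult_1_r // /Rdiv !Rmult_0_l.
Qed.

Lemma GAS_steady_state_unique (L : Op d -> Op d) (rhod rho : Op d) :
  GAS L rhod -> density rho -> L rho = Opzero -> L Opzero = Opzero ->
  forall x y, rho x y = rhod x y.
Proof.
move=> hG rho_dens Lrho L0 x y.
have [re_lim im_lim] := hG _ rho_dens _ (fixed_point_flow Lrho L0) x y.
by apply: Cext; apply: conv_infty_const.
Qed.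

Lemma proj_orth_neq (Psi Phi : Vec d) :
  inner Phi Phi = Cone -> inner Psi Phi = Czero ->
  ~ (forall x y, proj Phi x y = proj Psi x y).
Proof.
move=> Phi1 orth same.
have Phi0 : forall x, Phi x = Czero.
  move=> x; transitivity (apply (proj Phi) Phi x); first by rewrite apply_proj Phi1; csimp.
  transitivity (apply (proj Psi) Phi x); first by apply: Csum_ext => z; rewrite same.
  by rewrite apply_proj orth; csimp.
have : inner Phi Phi = Czero by apply: Csum_zero => z; rewrite Phi0; csimp.
by rewrite Phi1 => /(f_equal Re) /=; lra.
Qed.

(* Uniqueness of the steady state: if |Psi><Psi| is GAS, no unit vector Phi
   orthogonal to Psi can be an eigenvector of H killed by all noise
   operators, since |Phi><Phi| would then be a second steady state. *)
Lemma GAS_no_orthogonal_dark_state H (Ds : seq (Op d)) (Psi Phi : Vec d) (l : R) :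
  GAS (Lindblad H Ds) (proj Psi) -> hermitian H -> eigvec H Phi l ->
  (forall D, List.In D Ds -> forall x, apply D Phi x = Czero) ->
  inner Phi Phi = Cone -> inner Psi Phi = Czero -> False.
Proof.
move=> hG hH eigPhi DPhi Phi1 orth.
have stat : Lindblad H Ds (proj Phi) = Opzero.
  apply: functional_extensionality => x; apply: functional_extensionality => y.
  exact: (Lindblad_proj_stationary hH eigPhi DPhi x y).
apply: (proj_orth_neq Phi1 orth).
exact: GAS_steady_state_unique hG (density_proj Phi1) stat (Lindblad_zero Ds hH).
Qed.

Section QuasiLocality.
Variable N : {set 'I_n}.

Lemma mergeE x z (a : 'I_n) : merge N x z a = if a \in N then x a else z a.
Proof. by rewrite ffunE. Qed.

Lemma merge_id x : merge N x x = x.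
Proof. by apply/ffunP => a; rewrite mergeE; case: (a \in N). Qed.

Lemma merge_mergel x y z : merge N (merge N x y) z = merge N x z.
Proof. by apply/ffunP => a; rewrite !mergeE; case: (a \in N). Qed.

Lemma merge_merger x y z : merge N x (merge N y z) = merge N x z.
Proof. by apply/ffunP => a; rewrite !mergeE; case: (a \in N). Qed.

Lemma agree_outP x y : reflect (forall a, a \notin N -> x a = y a) (agree_out N x y).
Proof.
apply: (iffP forallP) => h a; last by apply/implyP => ha; apply/eqP; apply: h.
by move=> ha; have := h a; rewrite ha => /eqP.
Qed.

Lemma eq_mergeP (u z y : Ix d) :
  reflect ((forall a, a \in N -> u a = z a) /\ (forall a, a \notin N -> u a = y a))
          (u == merge N z y).
Proof.
apply: (iffP eqP) => [-> | [uz uy]].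
  by split=> a ha; rewrite mergeE ?ha // (negbTE ha).
by apply/ffunP => a; rewrite mergeE; case: ifP => ha; [rewrite uz | rewrite uy ?ha].
Qed.

Lemma ptr_proj_entry (Psi : Vec d) (u y : Ix d) :
  ptr_ext N (proj Psi) u y =
  Csum (fun z => if u == merge N z y then Cmul (Psi z) (Cconj (Psi (merge N y z)))
                 else Czero).
Proof.
rewrite /ptr_ext; case: (agree_outP u y) => uy; last first.
  symmetry; apply: Csum_zero => z; case: (eq_mergeP u z y) => // -[_ uy'].
  by case: uy => a ha; rewrite uy'.
rewrite /Csum big_mkcond; apply: eq_bigr => z _.
have -> : [forall a, (a \in N) ==> (z a == u a)] = (u == merge N z y).
  apply/forallP/eq_mergeP => [zu | [uz _] a]; last by apply/implyP => /uz ->.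
  by split=> // a ha; move/implyP/(_ ha)/eqP: (zu a).
by case: eqP => // ->; rewrite merge_mergel merge_id.
Qed.

Lemma mul_ptr_proj D (Psi : Vec d) x y :
  Opmul D (ptr_ext N (proj Psi)) x y =
  Csum (fun z => Cmul (D x (merge N z y)) (Cmul (Psi z) (Cconj (Psi (merge N y z))))).
Proof.
rewrite /Opmul; transitivity (Csum (fun u => Csum (fun z =>
  if u == merge N z y then Cmul (D x u) (Cmul (Psi z) (Cconj (Psi (merge N y z))))
  else Czero))).
  apply: Csum_ext => u; rewrite ptr_proj_entry Csum_mull.
  by apply: Csum_ext => z; case: ifP => _; csimp.
by rewrite Csum_exch; apply: Csum_ext => z; rewrite Csum_delta.
Qed.

Section LocalOperator.
Variables (D f : Op d).
Hypothesis f_local : forall x y x' y' : Ix d,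
  (forall a, a \in N -> x a = x' a /\ y a = y' a) -> f x y = f x' y'.
Hypothesis D_entry : forall x y, D x y = if agree_out N x y then f x y else Czero.

Lemma QL_entry_merge x y z :
  D x (merge N z y) = if agree_out N x y then f x z else Czero.
Proof.
rewrite D_entry; have -> : f x (merge N z y) = f x z.
  by apply: f_local => a ha; rewrite mergeE ha.
congr (if _ then _ else _).
by apply/agree_outP/agree_outP => h a ha; rewrite h // mergeE (negbTE ha).
Qed.

Lemma QL_apply_local (Psi : Vec d) x (u : Ix d) : (forall a, a \in N -> u a = x a) ->
  apply D Psi u = Csum (fun z => if u == merge N x z then Cmul (f x z) (Psi z) else Czero).
Proof.
move=> ux; apply: Csum_ext => z; rewrite D_entry.
have -> : f u z = f x z by apply: f_local => a ha; rewrite ux.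
have -> : agree_out N u z = (u == merge N x z).
  by apply/agree_outP/eq_mergeP => [uz | [_ uz]] //; split.
by case: ifP => _; csimp.
Qed.

(* The key identity: if D Psi = 0, then D annihilates the N-marginal of
   |Psi><Psi|, because sum_z f(x_N, z_N) Psi(z) conj Psi(y_N, z_out) is a
   superposition of the entries of D Psi. *)
Lemma QL_partial_contraction (Psi : Vec d) :
  (forall x, apply D Psi x = Czero) -> forall x y,
  Csum (fun z => Cmul (f x z) (Cmul (Psi z) (Cconj (Psi (merge N y z))))) = Czero.
Proof.
move=> DPsi x y.
transitivity (Csum (fun z => Csum (fun u => if u == merge N x z then
    Cmul (Cconj (Psi (merge N y u))) (Cmul (f x z) (Psi z)) else Czero))).
  by apply: Csum_ext => z; rewrite Csum_delta merge_merger; csimp.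
rewrite Csum_exch; apply: Csum_zero => u.
case: (eqVneq (merge N x u) u) => [ux | ux].
  have uN : forall a, a \in N -> u a = x a by move=> a ha; rewrite -ux mergeE ha.
  transitivity (Cmul (Cconj (Psi (merge N y u))) (apply D Psi u)); last first.
    by rewrite DPsi; csimp.
  rewrite (QL_apply_local _ uN) Csum_mull.
  by apply: Csum_ext => z; case: ifP => _; csimp.
apply: Csum_zero => z; case: eqP => // uE.
by move: ux; rewrite uE merge_merger eqxx.
Qed.

Lemma QL_mul_ptr_zero (Psi : Vec d) :
  (forall x, apply D Psi x = Czero) ->
  forall x y, Opmul D (ptr_ext N (proj Psi)) x y = Czero.
Proof.
move=> DPsi x y; rewrite mul_ptr_proj.
case xy: (agree_out N x y); under Csum_ext => z do rewrite QL_entry_merge xy.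
  exact: QL_partial_contraction.
by apply: Csum_zero => z; csimp.
Qed.

End LocalOperator.

Lemma QL_annihilates_support D (Psi v : Vec d) :
  is_QL N D -> (forall x, apply D Psi x = Czero) ->
  in_supp (ptr_ext N (proj Psi)) v -> forall x, apply D v x = Czero.
Proof.
move=> [f [f_local D_entry]] DPsi [w vE] x.
transitivity (apply (Opmul D (ptr_ext N (proj Psi))) w x).
  by rewrite apply_mul; apply: Csum_ext => z; rewrite vE.
apply: Csum_zero => z; rewrite (QL_mul_ptr_zero f_local D_entry DPsi); csimp.
Qed.

End QuasiLocality.

(* A Hermitian operator that kills Psi and maps Phi into span{Psi, Phi}, for
   orthonormal Psi and Phi, has Phi as an eigenvector with a real eigenvalue:
   the Psi-component vanishes since <Psi, H Phi> = <H Psi, Phi> = 0, and the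
   Phi-component <Phi, H Phi> is real. *)
Lemma herm_invariant_span_eigvec H (Psi Phi : Vec d) a b :
  hermitian H -> inner Psi Psi = Cone -> inner Phi Phi = Cone ->
  inner Psi Phi = Czero -> (forall x, apply H Psi x = Czero) ->
  (forall x, apply H Phi x = Cadd (Cmul a (Psi x)) (Cmul b (Phi x))) ->
  eigvec H Phi (Re b).
Proof.
move=> hH Psi1 Phi1 orth HPsi HPhi.
have HPhiE : apply H Phi = fun x => Cadd (Cmul a (Psi x)) (Cmul b (Phi x)).
  exact: functional_extensionality.
have a0 : a = Czero.
  have := herm_inner Psi Phi hH; rewrite HPhiE inner_lin Psi1 orth.
  have -> : inner (apply H Psi) Phi = Czero.
    by apply: Csum_zero => z; rewrite HPsi; csimp.
  by move=> e; apply: Cext; have := f_equal Re e; have := f_equal Im e; cbn; lra.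
have b_real : Im b = 0.
  have orth' : inner Phi Psi = Czero by rewrite -inner_conj orth; csimp.
  have := herm_inner Phi Phi hH.
  rewrite -(inner_conj Phi (apply H Phi)) HPhiE inner_lin orth' Phi1 a0.
  by move=> /(f_equal Im) /=; lra.
by move=> x; rewrite HPhi a0; apply: Cext; cbn; rewrite b_real; ring.
Qed.

Definition Opid : Op d := fun x y => if y == x then Cone else Czero.

Lemma apply_add A D v x : apply (Opadd A D) v x = Cadd (apply A v x) (apply D v x).
Proof. by rewrite /apply -Csum_add; apply: Csum_ext => z; rewrite /Opadd; csimp. Qed.

Lemma apply_scaled_id c v x : apply (Opscale c Opid) v x = Cmul c (v x).
Proof.
rewrite /apply -[RHS](Csum_delta x (fun z => Cmul c (v z))).
by apply: Csum_ext => z; rewrite /Opscale /Opid; case: eqP => _; csimp.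
Qed.

Lemma herm_real_scaled_id r : hermitian (Opscale (RtoC r) Opid).
Proof. by move=> x y; rewrite /adj /Opscale /Opid eq_sym; case: eqP => _; csimp. Qed.

Lemma is_QL_scaled_id (N : {set 'I_n}) c : is_QL N (Opscale c Opid).
Proof.
exists (fun x y => Cmul c (if [forall a, (a \in N) ==> (y a == x a)] then Cone else Czero)).
split=> [x y x' y' xy | x y].
  congr (Cmul c (if _ then _ else _)); apply: eq_forallb => a.
  by case: (boolP (a \in N)) => //= /xy [-> ->].
rewrite /Opscale /Opid; case: (agree_outP N x y) => xy; last first.
  case: eqP => [yx | _]; last by csimp.
  by case: xy => a _; rewrite yx.
congr (Cmul c (if _ then _ else _)); apply/eqP/forallP => [-> a | yx].
  by apply/implyP.
apply/ffunP => a; case: (boolP (a \in N)) => ha; last by rewrite xy.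
by move/implyP/(_ ha)/eqP: (yx a).
Qed.

Section QLHamiltonians.
Variables (K : nat) (Nb : 'I_K -> {set 'I_n}).

Lemma QL_Ham_herm H : QL_Ham Nb H -> hermitian H.
Proof.
move=> [s [s_QL HE]] x y; rewrite /adj !HE; elim: s s_QL {HE} => [|A s IH] s_QL.
  by rewrite !big_nil; csimp.
rewrite !big_cons IH => [|B Bs]; last by apply: s_QL; right.
by have [hA _] := s_QL A (or_introl erefl); rewrite (hA x y) /adj; csimp.
Qed.

Lemma QL_Ham_add A H : hermitian A -> QL_op Nb A -> QL_Ham Nb H -> QL_Ham Nb (Opadd A H).
Proof.
move=> hA qA [s [s_QL HE]]; exists (A :: s); split => [B [<- | Bs] | x y].
- by [].
- exact: s_QL.
- by rewrite big_cons -HE.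
Qed.

Lemma QL_Ham_no_neighborhood H : K = 0%N -> QL_Ham Nb H -> forall x y, H x y = Czero.
Proof.
move=> K0 [[|A s] [s_QL HE]] x y; rewrite HE ?big_nil //.
by have [_ [k _]] := s_QL A (or_introl erefl); case: k; rewrite K0.
Qed.

Lemma QL_Ham_shift_kernel H (Psi : Vec d) r : QL_Ham Nb H -> eigvec H Psi r ->
  exists H' c, [/\ QL_Ham Nb H', forall x, apply H' Psi x = Czero &
                   forall v x, apply H' v x = Cadd (Cmul (RtoC c) (v x)) (apply H v x)].
Proof.
move=> HQL eigPsi; case: (posnP K) => [K0 | K_gt0].
  have H0 := QL_Ham_no_neighborhood K0 HQL.
  exists H, 0; split => // [x | v x]; first by apply: Csum_zero => z; rewrite H0; csimp.
  by rewrite [apply H v x]Csum_zero => [|z]; rewrite ?H0; csimp.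
exists (Opadd (Opscale (RtoC (- r)) Opid) H), (- r); split.
- apply: QL_Ham_add HQL; first exact: herm_real_scaled_id.
  by exists (Ordinal K_gt0); apply: is_QL_scaled_id.
- by move=> x; rewrite apply_add apply_scaled_id eigPsi; csimp.
- by move=> v x; rewrite apply_add apply_scaled_id.
Qed.

End QLHamiltonians.

End Hilbert.

(* Corollary 3. *)
Theorem corollary3 (n : nat) (d : 'I_n -> nat) (K : nat)
  (Nb : 'I_K -> {set 'I_n})
  (HNb : forall k, Nb k \proper [set: 'I_n])
  (Psi Phi1 : Vec d)
  (HPsi : inner Psi Psi = Cone) (HPhi : inner Phi1 Phi1 = Cone)
  (Horth : inner Psi Phi1 = Czero)
  (Hqls : QLS Nb Psi) (Hndqls : ~ DQLS Nb Psi)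
  (HH0 : forall v : Vec d, in_H0 Nb (proj Psi) v <->
           exists a b : Cplx, forall x, v x = Cadd (Cmul a (Psi x)) (Cmul b (Phi1 x))) :
  exists Hc : Op d,
    QL_Ham Nb Hc /\ (forall x, apply Hc Psi x = Czero) /\
    ~ in_H0 Nb (proj Psi) (apply Hc Phi1).
Proof.
have [Hc [Ds [HcQL [Ds_QL [[r eigPsi] HG]]]]] := Hqls.
have Phi1_H0 : in_H0 Nb (proj Psi) Phi1 by apply/HH0; exists Czero, Cone => x; csimp.
have Ds_kill_Phi1 : forall D, List.In D Ds -> forall x, apply D Phi1 x = Czero.
  by move=> D /Ds_QL [[k Dk] DPsi]; apply: QL_annihilates_support Dk DPsi (Phi1_H0 k).
have [H' [c [H'QL H'Psi H'E]]] := QL_Ham_shift_kernel HcQL eigPsi.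
(* H' is the witness: were it not, H' would map Phi1 into H_0 = span{Psi, Phi1}. *)
apply: NNPP => no_witness.
have /HH0 [a [b H'Phi1]] : in_H0 Nb (proj Psi) (apply H' Phi1).
  by apply: NNPP => out; apply: no_witness; exists H'.
(* Then Phi1 is an eigenvector of H', hence of Hc: a second steady state. *)
have eigPhi1 := herm_invariant_span_eigvec (QL_Ham_herm H'QL) HPsi HPhi Horth H'Psi H'Phi1.
apply: (GAS_no_orthogonal_dark_state (l := Re b - c) HG (QL_Ham_herm HcQL) _
          Ds_kill_Phi1 HPhi Horth) => x.
have := eigPhi1 x; rewrite H'E => e.
by apply: Cext; have := f_equal Re e; have := f_equal Im e; cbn; lra.
Qed.
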